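(* Let $v_1,\dots,v_m$ be vectors in the closed unit ball $B^n$ of $\mathbb{R}^n$, and assume there are positive weights $\beta_1,\dots,\beta_m$ with \[ \sum_i\beta_i=1,\qquad\sum_i\beta_iv_i=0,\qquad\sum_i\beta_i|v_i|^2=\theta\ \text{ for some }\theta\in(0,1]. \] Then the inradius of $(\operatorname{conv}\{v_1,\dots,v_m\})^\circ$ is at most $1/\theta$.
   Context: The polar of $S\subseteq\mathbb{R}^n$ is $S^\circ=\{p:\langle x,p\rangle\le1\ \forall x\in S\}$. The inradius of a convex set is the supremum of radii of Euclidean balls contained in it (within its affine hull). *)

From HB Require Import structures.
From mathcomp Require Import all_boot all_order all_algebra.
From mathcomp Require Import all_classical all_reals ereal.
Set Implicit Arguments. Unset Strict Implicit. Unset Printing Implicit Defensive.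
Import Order.TTheory GRing.Theory Num.Theory.
Local Open Scope ring_scope.
Local Open Scope classical_set_scope.

Section Defs.
Variables (R : realType) (n : nat).

Definition dotv (u v : 'rV[R]_n) : R := \sum_(k < n) u ord0 k * v ord0 k.
Definition enorm (u : 'rV[R]_n) : R := Num.sqrt (dotv u u).

Definition conv_hull (S : set 'rV[R]_n) : set 'rV[R]_n :=
  [set x | exists (k : nat) (w : 'I_k -> R) (y : 'I_k -> 'rV[R]_n),
     (forall j, 0 <= w j) /\ \sum_(j < k) w j = 1 /\ (forall j, S (y j)) /\
     x = \sum_(j < k) w j *: y j].

Definition aff_hull (S : set 'rV[R]_n) : set 'rV[R]_n :=
  [set x | exists (k : nat) (w : 'I_k -> R) (y : 'I_k -> 'rV[R]_n),
     \sum_(j < k) w j = 1 /\ (forall j, S (y j)) /\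
     x = \sum_(j < k) w j *: y j].

Definition polar (S : set 'rV[R]_n) : set 'rV[R]_n :=
  [set p | forall x, S x -> dotv x p <= 1].

Definition inradius (S : set 'rV[R]_n) : \bar R :=
  ereal_sup [set r%:E | r in [set r : R | 0 <= r /\ exists c, aff_hull S c /\
     [set y | aff_hull S y /\ enorm (y - c) <= r] `<=` S]].

End Defs.

From HB Require Import structures.
From mathcomp Require Import all_boot all_order all_algebra.
From mathcomp Require Import all_classical all_reals ereal.
From mathcomp Require Import lra.

Set Implicit Arguments.
Unset Strict Implicit.
Unset Printing Implicit Defensive.
Import Order.TTheory GRing.Theory Num.Theory.
Local Open Scope ring_scope.
Local Open Scope classical_set_scope.

(* If the ball of radius r about c (within the affine hull) lies in the polar
   P of the hull of the v_i, then c + r v_i lies in P, whence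
   <v_i, c> + r |v_i|^2 <= 1 for every i.  Averaging with the weights beta_i
   kills the first term, because the barycentre is 0, and leaves r theta <= 1. *)

Section InnerProduct.
Variables (R : realType) (n : nat).
Implicit Types (u w : 'rV[R]_n) (a : R).

Lemma dotvC u w : dotv u w = dotv w u.
Proof. by apply: eq_bigr => k _; rewrite mulrC. Qed.

Lemma dotvDl u1 u2 w : dotv (u1 + u2) w = dotv u1 w + dotv u2 w.
Proof. by rewrite /dotv -big_split; apply: eq_bigr => k _; rewrite mxE mulrDl. Qed.

Lemma dotvZl a u w : dotv (a *: u) w = a * dotv u w.
Proof. by rewrite /dotv mulr_sumr; apply: eq_bigr => k _; rewrite mxE mulrA. Qed.

Lemma dotv0l w : dotv 0 w = 0.
Proof. by rewrite /dotv big1 // => k _; rewrite mxE mul0r. Qed.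

Lemma dotv_suml (k : nat) (c : 'I_k -> R) (y : 'I_k -> 'rV[R]_n) w :
  dotv (\sum_(j < k) c j *: y j) w = \sum_(j < k) c j * dotv (y j) w.
Proof.
elim: k c y => [|k IH] c y; first by rewrite !big_ord0 dotv0l.
by rewrite !big_ord_recr /= dotvDl dotvZl IH.
Qed.

Lemma dotvv_ge0 u : 0 <= dotv u u.
Proof. by apply: sumr_ge0 => k _; rewrite -expr2 sqr_ge0. Qed.

Lemma sqr_enorm u : enorm u ^+ 2 = dotv u u.
Proof. by rewrite /enorm sqr_sqrtr // dotvv_ge0. Qed.

Lemma enorm0 : enorm (0 : 'rV[R]_n) = 0.
Proof. by rewrite /enorm dotv0l sqrtr0. Qed.

Lemma enormZ a u : enorm (a *: u) = `|a| * enorm u.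
Proof.
by rewrite /enorm dotvZl dotvC dotvZl mulrA -expr2 sqrtrM ?sqr_ge0 // sqrtr_sqr.
Qed.

Lemma dotv_le_avg u w : dotv u w <= (dotv u u + dotv w w) / 2.
Proof.
rewrite /dotv -big_split /= mulr_suml; apply: ler_sum => k _.
have := sqr_ge0 (u ord0 k - w ord0 k); rewrite expr2; lra.
Qed.

Lemma dotv_le1 u w : enorm u <= 1 -> enorm w <= 1 -> dotv u w <= 1.
Proof.
have sqr_le1 (x : 'rV[R]_n) : enorm x <= 1 -> dotv x x <= 1.
  by move=> hx; rewrite -sqr_enorm exprn_ile1 // sqrtr_ge0.
by move=> /sqr_le1 hu /sqr_le1 hw; have := dotv_le_avg u w; lra.
Qed.

End InnerProduct.

Section PolarOfHull.
Variables (R : realType) (n : nat).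
Implicit Types (S : set 'rV[R]_n) (x y z p : 'rV[R]_n).

Lemma subset_conv_hull S : S `<=` conv_hull S.
Proof.
move=> x Sx; exists 1%N, (fun=> 1), (fun=> x).
by rewrite !big_ord1 scale1r.
Qed.

Lemma aff_hull_shift S x y z r :
  S x -> S y -> S z -> aff_hull S (x + r *: (y - z)).
Proof.
move=> Sx Sy Sz; exists 3%N, (nth 0 [:: 1; r; - r]), (nth 0 [:: x; y; z]).
split; first by rewrite !big_ord_recl big_ord0 /=; lra.
split; first by case=> [[|[|[|j]]] hj].
by rewrite !big_ord_recl big_ord0 /= scale1r addr0 scalerBr scaleNr addrA.
Qed.

Lemma polar0 S : polar S 0.
Proof. by move=> x _; rewrite dotvC dotv0l. Qed.

Lemma polar_conv_hull_ball S :
  (forall x, S x -> enorm x <= 1) -> S `<=` polar (conv_hull S).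
Proof.
move=> Sball p Sp x [k [w [y [w_ge0 [w_sum [Sy ->]]]]]].
rewrite dotv_suml -w_sum; apply: ler_sum => j _.
by rewrite ler_piMr // dotv_le1 // Sball.
Qed.

(* c + r x = c + r (x - 0) is an affine combination of c, x and 0, all in P. *)
Lemma polar_inball_bound S r c x :
  (forall x, S x -> enorm x <= 1) -> 0 <= r ->
  let P := polar (conv_hull S) in
  aff_hull P c -> [set y | aff_hull P y /\ enorm (y - c) <= r] `<=` P ->
  S x -> dotv x c + r * dotv x x <= 1.
Proof.
move=> Sball r_ge0 P c_aff ballP Sx.
have Sx_le1 := Sball x Sx.
have Pc : P c by apply: ballP; split; rewrite // subrr enorm0.
have Px : P x by apply: polar_conv_hull_ball.
have : P (c + r *: (x - 0)).
  apply: ballP; split; first by apply: aff_hull_shift => //; apply: polar0.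
  by rewrite subr0 addrC addKr enormZ ger0_norm // ler_piMr.
by move=> /(_ x (subset_conv_hull Sx)); rewrite subr0 dotvC dotvDl dotvZl dotvC.
Qed.

End PolarOfHull.

Lemma weighted_dotv_barycentre (R : realType) (n m : nat)
    (v : 'I_m -> 'rV[R]_n) (beta : 'I_m -> R) (c : 'rV[R]_n) (r : R) :
  \sum_(i < m) beta i *: v i = 0 ->
  \sum_(i < m) beta i * (dotv (v i) c + r * dotv (v i) (v i)) =
  r * \sum_(i < m) beta i * dotv (v i) (v i).
Proof.
move=> bary; under eq_bigr do rewrite mulrDr mulrCA.
by rewrite big_split /= -dotv_suml bary dotv0l add0r mulr_sumr.
Qed.

Theorem mainTheorem12 (R : realType) (n m : nat)
    (v : 'I_m -> 'rV[R]_n) (beta : 'I_m -> R) (theta : R) :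
  (forall i, enorm (v i) <= 1) ->
  (forall i, 0 < beta i) ->
  \sum_(i < m) beta i = 1 ->
  \sum_(i < m) beta i *: v i = 0 ->
  0 < theta -> theta <= 1 ->
  \sum_(i < m) beta i * enorm (v i) ^+ 2 = theta ->
  (inradius (polar (conv_hull (range v))) <= (theta^-1)%:E)%E.
Proof.
move=> v_le1 beta_gt0 beta_sum bary theta_gt0 _ theta_def.
apply: ge_ereal_sup => _ [r [r_ge0 [c [c_aff ballP]]] <-]; rewrite lee_fin.
have vball x : range v x -> enorm x <= 1 by case=> i _ <-.
have bound i : dotv (v i) c + r * dotv (v i) (v i) <= 1.
  by apply: (polar_inball_bound vball) => //; exists i.
have r_theta_le1 : r * theta <= 1.
  rewrite -beta_sum -theta_def (eq_bigr _ (fun i _ => congr1 _ (sqr_enorm _))).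
  rewrite -(weighted_dotv_barycentre c _ bary); apply: ler_sum => i _.
  by apply: ler_piMr; [exact: ltW | exact: bound].
by rewrite -div1r ler_pdivlMr.
Qed.
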